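(* Consider the FJ-FA system with availability one and locality two (defined in the context), with systematic service rate $\gamma$ and recovery service rates $\mu$, and let $\nu = \gamma + 2\mu$. Then the limiting fraction $w_s$ of requests completed by the systematic server and the limiting fraction $w_r$ of requests completed by the recovery group satisfy $$w_s \ge \frac{\gamma\nu}{\gamma\nu + 2\mu^2}, \qquad w_r \le \frac{2\mu^2}{\gamma\nu + 2\mu^2}.$$
   Context: Three servers store $a$ (systematic server), $b$ and $a+b$ (the two servers of the single recovery group for $a$). Requests arrive as a Poisson process of rate $\lambda$, and every request asks for $a$ (FJ-FA). Each request is replicated into a copy at the systematic server and a copy at the recovery group; the latter is forked into one sub-copy at each of the two recovery servers and completes when both sub-copies finish. The request completes as soon as its systematic copy finishes or its recovery-group copy completes, and all its outstanding copies/sub-copies (queued or in service) are then removed immediately. Each server has a FCFS queue and serves one sub-copy at a time; service times are independent across servers and copies, $\mathrm{Exp}(\gamma)$ at the systematic server and $\mathrm{Exp}(\mu)$ at each recovery server. The system is assumed stable and $w_s$, $w_r$ are steady-state (limiting) fractions of request completions, with $w_s + w_r = 1$. *)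

From HB Require Import structures.
From mathcomp Require Import all_boot all_order all_algebra.
From mathcomp Require Import all_classical all_reals all_analysis.
Set Implicit Arguments. Unset Strict Implicit. Unset Printing Implicit Defensive.
Import Order.TTheory GRing.Theory Num.Theory.
Local Open Scope classical_set_scope.
Local Open Scope ring_scope.

(* Servers: systematic server (stores a), recovery servers R1 (stores b) and *)
(* R2 (stores a+b).  Every request is replicated to all three servers; the   *)
(* request completes when its systematic copy finishes, or when BOTH of its  *)
(* recovery sub-copies (at R1 and R2) finish; all its remaining copies are   *)
(* then removed.  All queues are FCFS, one sub-copy in service per server.   *)
(* State of the system: the sequence of requests present, ordered by arrival *)
(* (oldest first).  Each request records which of its recovery sub-copies    *)
(* have finished: (done at R1, done at R2).  (A request whose systematic copy*)
(* finished, or with both recovery sub-copies finished, has left.)           *)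
(* By FCFS, the systematic server serves the oldest request; recovery server *)
(* Rj serves the oldest request whose Rj-sub-copy is not yet finished.       *)
(* With Poisson(lambda) arrivals and exponential services this is a          *)
(* continuous-time Markov chain whose transitions are listed below.          *)

Definition fjfa_state := seq (bool * bool).

Inductive fjfa_event := Arrival | SysCompletion | RecCompletion | RecPartial.

(* j = false : recovery server R1 ; j = true : recovery server R2 *)
Definition rec_done (j : bool) (x : bool * bool) : bool := if j then x.2 else x.1.
Definition rec_mark (j : bool) (x : bool * bool) : bool * bool :=
  if j then (x.1, true) else (true, x.2).

Definition rec_next (j : bool) (s : fjfa_state) : option (fjfa_state * bool) :=
  let i := find (fun x => ~~ rec_done j x) s in
  if (i < size s)%N then
    let x' := rec_mark j (nth (false, false) s i) in
    if x'.1 && x'.2 then Some (take i s ++ drop i.+1 s, true)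
    else Some (set_nth (false, false) s i x', false)
  else None.

Definition rec_trans {R : realType} (mu : R) (j : bool) (s : fjfa_state)
  : seq (R * fjfa_state * fjfa_event) :=
  match rec_next j s with
  | Some (s', true) => [:: (mu, s', RecCompletion)]
  | Some (s', false) => [:: (mu, s', RecPartial)]
  | None => [::]
  end.

Definition fjfa_trans {R : realType} (lam gam mu : R) (s : fjfa_state)
  : seq (R * fjfa_state * fjfa_event) :=
  (lam, rcons s (false, false), Arrival)
  :: (if s is _ :: s' then [:: (gam, s', SysCompletion)] else [::])
  ++ rec_trans mu false s ++ rec_trans mu true s.

Definition fjfa_rate {R : realType} (lam gam mu : R) (s t : fjfa_state) : R :=
  \sum_(e <- fjfa_trans lam gam mu s | e.1.2 == t) e.1.1.

Definition fjfa_out {R : realType} (lam gam mu : R) (s : fjfa_state) : R :=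
  \sum_(e <- fjfa_trans lam gam mu s | e.1.2 != s) e.1.1.

Definition is_sys_completion (e : fjfa_event) : bool :=
  if e is SysCompletion then true else false.
Definition is_rec_completion (e : fjfa_event) : bool :=
  if e is RecCompletion then true else false.

Definition sys_compl_rate {R : realType} (lam gam mu : R) (s : fjfa_state) : R :=
  \sum_(e <- fjfa_trans lam gam mu s | is_sys_completion e.2) e.1.1.
Definition rec_compl_rate {R : realType} (lam gam mu : R) (s : fjfa_state) : R :=
  \sum_(e <- fjfa_trans lam gam mu s | is_rec_completion e.2) e.1.1.

Definition fjfa_stationary {R : realType} (lam gam mu : R) (pi : fjfa_state -> R) : Prop :=
  (forall s, 0 <= pi s) /\
  (\esum_(s in [set: fjfa_state]) (pi s)%:E = 1%E) /\
  (forall t, \esum_(s in [set s | s != t]) (pi s * fjfa_rate lam gam mu s t)%:E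
             = (pi t * fjfa_out lam gam mu t)%:E).

Definition sys_throughput {R : realType} (lam gam mu : R) (pi : fjfa_state -> R) : R :=
  fine (\esum_(s in [set: fjfa_state]) (pi s * sys_compl_rate lam gam mu s)%:E).
Definition rec_throughput {R : realType} (lam gam mu : R) (pi : fjfa_state -> R) : R :=
  fine (\esum_(s in [set: fjfa_state]) (pi s * rec_compl_rate lam gam mu s)%:E).

Definition w_s {R : realType} (lam gam mu : R) (pi : fjfa_state -> R) : R :=
  sys_throughput lam gam mu pi
  / (sys_throughput lam gam mu pi + rec_throughput lam gam mu pi).
Definition w_r {R : realType} (lam gam mu : R) (pi : fjfa_state -> R) : R :=
  rec_throughput lam gam mu pi
  / (sys_throughput lam gam mu pi + rec_throughput lam gam mu pi).

From HB Require Import structures.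
From mathcomp Require Import all_boot all_order all_algebra.
From mathcomp Require Import all_classical all_reals all_analysis.
From mathcomp Require Import ring lra zify.
Import Order.TTheory GRing.Theory Num.Theory.
Local Open Scope ring_scope.
Local Open Scope classical_set_scope.
Set Implicit Arguments. Unset Strict Implicit.

(** Started empty, the chain only visits the staged states [staged b k r]: [k]
    requests of which only the sub-copy at recovery server [b] has finished,
    followed by [r] requests untouched by the recovery group (the recovery server
    that is ahead has served a prefix of the queue the other one has not).  They
    form a closed class that systematic completions lead into from every other
    state, so a stationary [pi] vanishes outside it.  In a staged state the
    systematic server is busy iff the system is nonempty, so its throughput is
    [gam * P(busy)], and recovery completions occur at rate [mu] iff [k > 0].
    The Lyapunov function [mu * min(k, m)] has drift at most
    [2 mu^2 - nu * (recovery completion rate)] on [k <= m]; a bounded function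
    has zero mean drift under [pi], so letting [m] grow gives
    [nu * (recovery throughput) <= 2 mu^2 P(busy)], and both bounds follow. *)

Section EsumFacts.
Variables (R : realType) (T : choiceType).
Implicit Types (D : set T) (a : T -> \bar R).

Lemma ge0_esumZl D (c : R) a : 0 <= c -> (forall t, (0 <= a t)%E) ->
  (c%:E * \esum_(t in D) a t)%E = \esum_(t in D) (c%:E * a t)%E.
Proof.
move=> c0 a0; rewrite /esum -ereal_supZl //; last first.
  by apply/set0P; exists 0%E, set0; [exact: fsets_set0 | rewrite fsbig_set0].
congr ereal_sup; apply/seteqP; split => y /=.
- move=> [x [X [finX XD] <-] <-]; exists X => //.
  by rewrite !fsbig_finite // ge0_sume_distrr.
- move=> [X [finX XD] <-]; exists (\sum_(i \in X) a i)%E; first by exists X.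
  by rewrite !fsbig_finite // ge0_sume_distrr.
Qed.

Lemma esum_ge_term D a s : (forall t, D t -> (0 <= a t)%E) -> D s ->
  (a s <= \esum_(t in D) a t)%E.
Proof.
move=> a0 Ds; apply: esum_ge; exists [set s]; last by rewrite fsbig_set1.
by split; [exact: finite_set1 | move=> t ->].
Qed.

Lemma esum_delta D x (c : \bar R) : (0 <= c)%E ->
  \esum_(t in D) (if x == t then c else 0%E) = if x \in D then c else 0%E.
Proof.
move=> c0; rewrite (esumID [set x]); last by move=> t _; case: eqP.
rewrite [X in (_ + X)%E]esum1 ?adde0; last first.
  by move=> t [_ /eqP]; rewrite eq_sym => /negbTE ->.
case: (boolP (x \in D)) => [/set_mem Dx | /negP xD].
  by rewrite setIidr ?esum_set1 ?eqxx // => t ->.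
rewrite (_ : _ `&` _ = set0) ?esum_set0 //.
by apply/seteqP; split => // t [Dt tx]; apply: xD; rewrite -tx; apply/mem_set.
Qed.

End EsumFacts.

Section Mean.
Variables (R : realType) (T : choiceType) (pi : T -> R).
Hypothesis pi_ge0 : forall s, 0 <= pi s.
Implicit Types (f g : T -> R).

Definition mean f : \bar R := \esum_(s in [set: T]) (pi s * f s)%:E.

Lemma mean_ge0 f : (forall s, 0 <= f s) -> (0 <= mean f)%E.
Proof. by move=> f0; apply: esum_ge0 => s _; rewrite lee_fin mulr_ge0. Qed.

Lemma le_mean f g : (forall s, pi s != 0 -> f s <= g s) -> (mean f <= mean g)%E.
Proof.
move=> fg; apply: le_esum => s _; rewrite lee_fin.
by have [->|/fg/ler_wpM2l->//] := eqVneq (pi s) 0; rewrite !mul0r.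
Qed.

Lemma meanD f g : (forall s, 0 <= f s) -> (forall s, 0 <= g s) ->
  mean (fun s => f s + g s) = (mean f + mean g)%E.
Proof.
move=> f0 g0; rewrite /mean -esumD => [|s _|s _]; rewrite ?lee_fin ?mulr_ge0 //.
by apply: eq_esum => s _; rewrite mulrDr EFinD.
Qed.

Lemma meanZ (c : R) f : 0 <= c -> (forall s, 0 <= f s) ->
  mean (fun s => c * f s) = (c%:E * mean f)%E.
Proof.
move=> c0 f0; rewrite /mean ge0_esumZl // => [|s]; last by rewrite lee_fin mulr_ge0.
by apply: eq_esum => s _; rewrite -EFinM mulrCA.
Qed.

Lemma mean_term_eq0 f s : (forall t, 0 <= f t) -> mean f = 0%E -> pi s * f s = 0.
Proof.
move=> f0 mf0; apply/eqP; rewrite eq_le mulr_ge0 // andbT -lee_fin.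
have : ((pi s * f s)%:E <= mean f)%E.
  by apply: (esum_ge_term (a := fun t => (pi t * f t)%:E)) => // t _; rewrite lee_fin mulr_ge0.
by rewrite mf0.
Qed.

Lemma mean_le_trunc f (h : T -> nat) (B : \bar R) : (forall s, 0 <= f s) ->
  (forall m, (mean (fun s => f s * (h s <= m)%:R)%R <= B)%E) -> (mean f <= B)%E.
Proof.
move=> f0 trunc; apply: ge_ereal_sup => _ [X [finX _] <-].
pose m := (\max_(t <- finmap.enum_fset (fset_set X)) h t)%N.
apply: le_trans (trunc m); apply: esum_ge; exists X => //.
rewrite !fsbig_finite // big_seq [leRHS]big_seq; apply: lee_sum => s sX.
by rewrite (leq_bigmax_seq (F := h)) ?mulr1.
Qed.

Hypothesis pi_sum1 : \esum_(s in [set: T]) (pi s)%:E = 1%E.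

Lemma mean_le f (M : R) : (forall s, 0 <= f s) -> (forall s, f s <= M) ->
  (mean f <= M%:E)%E.
Proof.
move=> f0 fM; have M0 : 0 <= M.
  (* otherwise [T] would be empty, contradicting the total mass [1] of [pi] *)
  rewrite leNgt; apply/negP => M0; move/eqP: pi_sum1; rewrite esum1 ?eqe 1?eq_sym ?oner_eq0 //.
  by move=> s _; have := le_lt_trans (le_trans (f0 s) (fM s)) M0; rewrite ltxx.
apply: (@le_trans _ _ (\esum_(s in [set: T]) (M%:E * (pi s)%:E))%E).
  by apply: le_esum => s _; rewrite -EFinM lee_fin mulrC ler_wpM2r.
by rewrite -ge0_esumZl // pi_sum1 mule1.
Qed.

Lemma mean_fin_num f (M : R) : (forall s, 0 <= f s) -> (forall s, f s <= M) ->
  mean f \is a fin_num.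
Proof.
move=> f0 fM; rewrite ge0_fin_numE ?mean_ge0 //.
exact: le_lt_trans (mean_le f0 fM) (ltry M).
Qed.

End Mean.

Section WeightedLists.
Variables (R : realType) (A : Type).
Implicit Types (l : seq A) (P Q : pred A) (F : A -> R).

Lemma sum_all_ge0 l P Q F : all P l -> (forall e, P e -> Q e -> 0 <= F e) ->
  0 <= \sum_(e <- l | Q e) F e.
Proof.
by move=> /all_filterP <- F0; rewrite big_filter_cond; apply: sumr_ge0 => e /andP[/F0].
Qed.

Lemma sub_sum_all l P Q Q' F : all P l -> (forall e, P e -> 0 <= F e) ->
  (forall e, Q e -> Q' e) -> \sum_(e <- l | Q e) F e <= \sum_(e <- l | Q' e) F e.
Proof.
move=> lP F0 QQ'; rewrite [leRHS](bigID Q) /=.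
rewrite (eq_bigl Q) => [|e]; last by apply/andP/idP => [[]|/[dup]/QQ'].
by rewrite lerDl (sum_all_ge0 lP) // => e /F0.
Qed.

End WeightedLists.

Section Chain.
Variables (R : realType) (T : choiceType) (E : Type).
Variable trans : T -> seq (R * T * E).
Hypothesis trans_ge0 : forall s, all (fun e => 0 <= e.1.1) (trans s).
Implicit Types (s t : T) (a b f g : T -> R) (pi : T -> R).

Definition jump_rate s t := \sum_(e <- trans s | e.1.2 == t) e.1.1.
Definition exit_rate s := \sum_(e <- trans s | e.1.2 != s) e.1.1.
Definition balanced pi := forall t,
  \esum_(s in [set s | s != t]) (pi s * jump_rate s t)%:E = (pi t * exit_rate t)%:E.
Definition jump_sum f s := \sum_(e <- trans s | e.1.2 != s) e.1.1 * f e.1.2.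
Definition generator f s := \sum_(e <- trans s) e.1.1 * (f e.1.2 - f s).

Lemma jump_rate_ge0 s t : 0 <= jump_rate s t.
Proof. exact: sum_all_ge0 (trans_ge0 s) _. Qed.

Lemma exit_rate_ge0 s : 0 <= exit_rate s.
Proof. exact: sum_all_ge0 (trans_ge0 s) _. Qed.

Lemma jump_sum_ge0 f s : (forall t, 0 <= f t) -> 0 <= jump_sum f s.
Proof. by move=> f0; apply: sum_all_ge0 (trans_ge0 s) _ => e e0 _; rewrite mulr_ge0. Qed.

Lemma jump_sumBE f s : jump_sum f s - exit_rate s * f s = generator f s.
Proof.
rewrite /jump_sum /exit_rate mulr_suml -sumrB big_mkcond; apply: eq_bigr => e _.
by case: eqVneq => [->|_]; rewrite ?subrr ?mulr0 // mulrBr.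
Qed.

Lemma esum_by_target (l : seq (R * T * E)) s g :
  all (fun e => 0 <= e.1.1) l -> (forall t, 0 <= g t) ->
  \esum_(t in [set t | t != s]) (g t * \sum_(e <- l | e.1.2 == t) e.1.1)%:E =
  (\sum_(e <- l | e.1.2 != s) g e.1.2 * e.1.1)%:E.
Proof.
move=> + g0; elim: l => [_|e l IH /andP[e0 /[dup] l0 /IH {}IH]].
  by rewrite big_nil esum1 // => t _; rewrite big_nil mulr0.
have headE t : (g t * \sum_(e' <- e :: l | e'.1.2 == t) e'.1.1)%:E =
    ((if e.1.2 == t then (g e.1.2 * e.1.1)%:E else 0%E) +
     (g t * \sum_(e' <- l | e'.1.2 == t) e'.1.1)%:E)%E.
  by rewrite big_cons; case: eqP => [->|_]; rewrite ?add0e // mulrDr EFinD.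
rewrite (eq_esum (fun t _ => headE t)) esumD => [|t _|t _]; first last.
- by rewrite lee_fin mulr_ge0 // (sum_all_ge0 l0).
- by case: eqP; rewrite ?lee_fin ?mulr_ge0.
rewrite esum_delta ?lee_fin ?mulr_ge0 // IH big_cons.
have [es|es] := boolP (e.1.2 != s); first by rewrite mem_set // EFinD.
by rewrite memNset ?add0e //=; apply/negP.
Qed.

Section Stationary.
Variable pi : T -> R.
Hypotheses (pi_ge0 : forall s, 0 <= pi s) (pi_bal : balanced pi).

Lemma balanced_jump_sum f : (forall t, 0 <= f t) ->
  mean pi (jump_sum f) = mean pi (fun s => exit_rate s * f s).
Proof.
move=> f0; pose a s t := (pi s * f t * jump_rate s t)%:E.
have a0 s t : (0 <= a s t)%E by rewrite lee_fin !mulr_ge0 ?jump_rate_ge0.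
transitivity (\esum_(k in [set: T] `*`` (fun s => [set t | t != s])) a k.1 k.2).
  rewrite -esum_esum => [|s t _ _]; last exact: a0.
  apply: eq_esum => s _; rewrite (esum_by_target _ (trans_ge0 s)) => [|t]; last exact: mulr_ge0.
  by rewrite /jump_sum mulr_sumr; congr EFin; apply: eq_bigr => e _; rewrite mulrAC mulrA.
symmetry; transitivity (\esum_(k in [set: T] `*`` (fun t => [set s | s != t])) a k.2 k.1).
  rewrite -(esum_esum (a := fun t s => a s t)) => [|t s _ _]; last exact: a0.
  apply: eq_esum => t _; rewrite mulrA mulrC EFinM -pi_bal ge0_esumZl // => [|s].
    by apply: eq_esum => s _; rewrite /a -EFinM mulrCA mulrA.
  by rewrite lee_fin mulr_ge0 ?jump_rate_ge0.
rewrite (reindex_esum ([set: T] `*`` (fun s => [set t | t != s])) _ (fun k => (k.2, k.1))) //.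
split.
- by move=> [s t] [_ /=]; rewrite eq_sym.
- by move=> [? ?] [? ?] _ _ [-> ->].
- by move=> [t s] [_ /=] ts; exists (s, t) => //; split => //=; rewrite eq_sym.
Qed.

Lemma balanced_jump_rate_eq0 s t : pi t = 0 -> s != t -> pi s * jump_rate s t = 0.
Proof.
move=> pit0 st; apply/eqP; rewrite eq_le mulr_ge0 ?jump_rate_ge0 // andbT -lee_fin.
have := pi_bal t; rewrite pit0 mul0r => <-.
by apply: (esum_ge_term (a := fun s => (pi s * jump_rate s t)%:E)) => // u _;
  rewrite lee_fin mulr_ge0 ?jump_rate_ge0.
Qed.

Hypothesis pi_sum1 : \esum_(s in [set: T]) (pi s)%:E = 1%E.
Variable M : R.
Hypothesis exit_rate_le : forall s, exit_rate s <= M.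

Lemma stationary_drift a b f (C : R) :
  (forall s, 0 <= a s) -> (forall s, 0 <= b s) ->
  (forall s, 0 <= f s) -> (forall s, f s <= C) ->
  (forall s, pi s != 0 -> a s + generator f s <= b s) ->
  (mean pi a <= mean pi b)%E.
Proof.
(* [f] being bounded, [balanced_jump_sum] says its mean drift vanishes. *)
move=> a0 b0 f0 fC drift.
have ef0 s : 0 <= exit_rate s * f s by rewrite mulr_ge0 ?exit_rate_ge0.
have ef_fin : mean pi (fun s => exit_rate s * f s) \is a fin_num.
  apply: (mean_fin_num pi_ge0 pi_sum1 (M := M * C)) => // s.
  by rewrite ler_pM ?exit_rate_ge0.
have : (mean pi (fun s => a s + jump_sum f s)%R <=
        mean pi (fun s => b s + exit_rate s * f s)%R)%E.
  by apply: (le_mean pi_ge0) => s /drift; rewrite -jump_sumBE; lra.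
by rewrite !(meanD pi_ge0) // ?balanced_jump_sum // ?leeD2rE // => s; rewrite jump_sum_ge0.
Qed.

Lemma stationary_closed_entry (A : pred T) s :
  (forall t, A t -> \sum_(e <- trans t | ~~ A e.1.2) e.1.1 = 0) -> ~~ A s ->
  pi s * \sum_(e <- trans s | A e.1.2) e.1.1 = 0.
Proof.
move=> closedA As.
pose a t := if A t then 0 else \sum_(e <- trans t | A e.1.2) e.1.1.
have a0 t : 0 <= a t by rewrite /a; case: ifP => // _; apply: sum_all_ge0 (trans_ge0 t) _.
suff : mean pi a = 0%E by move/(mean_term_eq0 pi_ge0 s a0); rewrite /a (negbTE As).
apply/eqP; rewrite eq_le (mean_ge0 pi_ge0) // andbT.
have -> : 0%E = mean pi (fun=> 0) by rewrite /mean esum1 // => t _; rewrite mulr0.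
apply: (stationary_drift (f := fun t => (~~ A t)%:R) (C := 1)) => // [t|t _].
  by case: (A t).
rewrite /a /generator; case: ifPn => At.
  rewrite add0r -[leRHS](closedA t At) [leRHS]big_mkcond.
  by apply: ler_sum => e _; case: (A e.1.2); rewrite /= ?subr0 ?mulr1 ?mulr0.
rewrite big_mkcond -big_split big1 // => e _ /=.
by case: (A e.1.2); rewrite /= ?subrr ?mulr0 ?addr0 // add0r mulrN1 subrr.
Qed.

End Stationary.
End Chain.

Definition served_at (b : bool) : bool * bool := if b then (false, true) else (true, false).

Definition staged (b : bool) (k r : nat) : fjfa_state :=
  nseq k (served_at b) ++ nseq r (false, false).

Definition npartial (s : fjfa_state) : nat := count (fun x => x != (false, false)) s.

Definition is_staged (s : fjfa_state) : bool :=
  [exists b : bool, s == staged b (npartial s) (size s - npartial s)].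

Lemma npartial_staged b k r : npartial (staged b k r) = k.
Proof. by rewrite /npartial count_cat !count_nseq; case: b; rewrite /= mul1n mul0n addn0. Qed.

Lemma size_staged b k r : size (staged b k r) = (k + r)%N.
Proof. by rewrite size_cat !size_nseq. Qed.

Lemma is_stagedP s : reflect (exists b k r, s = staged b k r) (is_staged s).
Proof.
apply: (iffP existsP) => [[b /eqP ->]|[b [k [r ->]]]]; first by exists b; do 2 eexists.
by exists b; rewrite npartial_staged size_staged addKn.
Qed.

Lemma is_staged_staged b k r : is_staged (staged b k r).
Proof. by apply/is_stagedP; exists b, k, r. Qed.

Lemma rec_next_cons_done j x s : rec_done j x ->
  rec_next j (x :: s) = omap (fun p => (x :: p.1, p.2)) (rec_next j s).
Proof. by move=> jx; rewrite /rec_next /= jx /= ltnS; case: ifP => // _; case: ifP. Qed.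

Lemma rec_next_fresh j s : rec_next j ((false, false) :: s) = Some (served_at j :: s, false).
Proof. by case: j. Qed.

Lemma rec_next_served_other b s : rec_next (~~ b) (served_at b :: s) = Some (s, true).
Proof. by case: b; rewrite /rec_next /= ?drop0. Qed.

Lemma rec_next_staged b k r : rec_next b (staged b k r) =
  if r is r'.+1 then Some (staged b k.+1 r', false) else None.
Proof.
elim: k => [|k IH]; first by case: r => [|r] //=; rewrite rec_next_fresh.
by rewrite /staged /= rec_next_cons_done -/(staged b k r) ?IH; case: b r {IH} => -[].
Qed.

Lemma rcons_staged b k r : rcons (staged b k r) (false, false) = staged b k r.+1.
Proof. by rewrite /staged rcons_cat; congr (_ ++ _); elim: r => //= r ->. Qed.

Section StagedTransitions.
Variables (R : realType) (lam gam mu : R) (F : R * fjfa_state * fjfa_event -> R).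

Lemma sum_trans_empty b :
  \sum_(e <- fjfa_trans lam gam mu (staged b 0 0)) F e = F (lam, staged b 0 1, Arrival).
Proof. by rewrite /fjfa_trans /rec_trans /= big_cons big_nil addr0. Qed.

Lemma sum_trans_fresh b r :
  \sum_(e <- fjfa_trans lam gam mu (staged b 0 r.+1)) F e =
  F (lam, staged b 0 r.+2, Arrival) + F (gam, staged b 0 r, SysCompletion)
  + F (mu, staged false 1 r, RecPartial) + F (mu, staged true 1 r, RecPartial).
Proof.
rewrite /fjfa_trans /rec_trans rcons_staged /=.
by rewrite !big_cons big_nil addr0 !addrA.
Qed.

Lemma sum_trans_staged b k r :
  \sum_(e <- fjfa_trans lam gam mu (staged b k.+1 r)) F e =
  F (lam, staged b k.+1 r.+1, Arrival) + F (gam, staged b k r, SysCompletion)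
  + (if r is r'.+1 then F (mu, staged b k.+2 r', RecPartial) else 0)
  + F (mu, staged b k r, RecCompletion).
Proof.
rewrite /fjfa_trans rcons_staged /rec_trans.
have own := rec_next_staged b k.+1 r; have other := rec_next_served_other b (staged b k r).
case: b own other => -> ->; case: r => [|r].
all: by rewrite /= !big_cons ?big_cat /= ?big_cons ?big_nil; ring.
Qed.

End StagedTransitions.

Lemma minnS_addn k m : minn k.+1 m = (minn k m + (k < m))%N.
Proof. by case: ltnP => km /=; lia. Qed.

Section FjfaRates.
Variables (R : realType) (lam gam mu : R).
Hypotheses (lam_ge0 : 0 <= lam) (gam_ge0 : 0 <= gam) (mu_ge0 : 0 <= mu).
Local Notation trans := (fjfa_trans lam gam mu).

Lemma fjfa_trans_ge0 s : all (fun e => 0 <= e.1.1) (trans s).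
Proof.
rewrite /fjfa_trans /= lam_ge0 !all_cat /rec_trans.
by case: s => [|x s]; case: (rec_next _ _) => [[? []]|]; case: (rec_next _ _) => [[? []]|];
  rewrite /= ?gam_ge0 ?mu_ge0.
Qed.

Lemma fjfa_exit_rate_le s : exit_rate trans s <= lam + gam + 2 * mu.
Proof.
apply: le_trans (sub_sum_all (Q' := predT) (fjfa_trans_ge0 s) (fun e e0 => e0) _) _ => //.
have rec_le j : \sum_(e <- rec_trans mu j s) e.1.1 <= mu.
  by rewrite /rec_trans; case: (rec_next _ _) => [[? []]|]; rewrite ?big_cons ?big_nil ?addr0.
have sys_le : \sum_(e <- if s is _ :: s' then [:: (gam, s', SysCompletion)] else [::]) e.1.1 <= gam.
  by case: (s) => [|? ?]; rewrite ?big_cons ?big_nil ?addr0.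
rewrite big_cons !big_cat /=; have := rec_le false; have := rec_le true; lra.
Qed.

Lemma sys_compl_rateE s : sys_compl_rate lam gam mu s = if s is _ :: _ then gam else 0.
Proof.
have rec0 j : \sum_(e <- rec_trans mu j s | is_sys_completion e.2) e.1.1 = 0.
  by rewrite /rec_trans; case: (rec_next _ _) => [[? []]|]; rewrite ?big_cons ?big_nil.
rewrite /sys_compl_rate /fjfa_trans big_cons /= !big_cat /= !rec0.
by case: (s) => [|x s']; rewrite ?big_cons big_nil /= !addr0.
Qed.

Lemma jump_rate_nil : jump_rate trans [::] [:: (false, false)] = lam.
Proof. by rewrite /jump_rate /fjfa_trans /= big_cons big_nil eqxx addr0. Qed.

Lemma jump_rate_behead_ge x s : gam <= jump_rate trans (x :: s) s.
Proof.
have /and3P[_ _ rec_ge0] := fjfa_trans_ge0 (x :: s).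
have grown : rcons (x :: s) (false, false) != s.
  by apply/eqP => /(congr1 size); rewrite size_rcons /=; lia.
rewrite /jump_rate /fjfa_trans big_cons /= (negPf grown) big_cons /= eqxx.
by rewrite lerDl (sum_all_ge0 rec_ge0).
Qed.

Lemma staged_closed s : is_staged s -> \sum_(e <- trans s | ~~ is_staged e.1.2) e.1.1 = 0.
Proof.
move/is_stagedP => [b [[|k] [r ->]]]; rewrite big_mkcond.
  case: r => [|r]; rewrite ?sum_trans_empty ?sum_trans_fresh /= !is_staged_staged //=.
  by rewrite !addr0.
rewrite sum_trans_staged /= !is_staged_staged.
by case: r => [|r]; rewrite /= ?is_staged_staged !addr0.
Qed.

Lemma drift_staged m s : is_staged s ->
  (gam + 2 * mu) * rec_compl_rate lam gam mu s * (npartial s <= m)%:R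
  + generator trans (fun t => mu * (minn (npartial t) m)%:R) s
  <= 2 * mu ^+ 2 * (s != [::])%:R.
Proof.
have up k : mu * (minn k.+1 m)%:R - mu * (minn k m)%:R = mu * (k < m)%:R.
  by rewrite -mulrBr minnS_addn natrD addrC addKr.
have down k : mu * (minn k m)%:R - mu * (minn k.+1 m)%:R = - (mu * (k < m)%:R).
  by rewrite -up opprB.
have mu2_ge0 : 0 <= 2 * mu ^+ 2 by rewrite mulr_ge0 ?exprn_ge0.
move/is_stagedP => [b [[|k] [r ->]]]; rewrite /rec_compl_rate /generator big_mkcond.
  case: r => [|r]; rewrite ?sum_trans_empty ?sum_trans_fresh !npartial_staged /= ?up ?subrr.
    lra.
  by case: (0 < m)%N; rewrite /= ?mulr1 ?mulr0; lra.
rewrite sum_trans_staged; case: r => [|r]; rewrite sum_trans_staged !npartial_staged /= !down ?up.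
all: by case: (ltnP k m) => km; case: (ltnP k.+1 m) => kSm; rewrite /= ?mulr1 ?mulr0; nra.
Qed.

End FjfaRates.

Definition busy_prob (R : realType) (pi : fjfa_state -> R) : R :=
  fine (mean pi (fun s => (s != [::])%:R)).

Section FjfaStationary.
Variables (R : realType) (lam gam mu : R) (pi : fjfa_state -> R).
Hypotheses (lam_gt0 : 0 < lam) (gam_gt0 : 0 < gam) (mu_gt0 : 0 < mu).
Hypothesis pi_st : fjfa_stationary lam gam mu pi.
Local Notation trans := (fjfa_trans lam gam mu).

Let trans_ge0 := fjfa_trans_ge0 (ltW lam_gt0) (ltW gam_gt0) (ltW mu_gt0).
Let exit_le := fjfa_exit_rate_le (ltW lam_gt0) (ltW gam_gt0) (ltW mu_gt0).
Let behead_ge := jump_rate_behead_ge (ltW lam_gt0) (ltW gam_gt0) (ltW mu_gt0).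
Let pi_ge0 : forall s, 0 <= pi s := pi_st.1.
Let pi_sum1 : \esum_(s in [set: fjfa_state]) (pi s)%:E = 1%E := pi_st.2.1.
Let pi_bal : balanced trans pi := pi_st.2.2.

Let busy_fin : mean pi (fun s => (s != [::])%:R) \is a fin_num.
Proof. by apply: (mean_fin_num pi_ge0 pi_sum1 (M := 1)) => s; case: (s != [::]). Qed.

Let rec_ge0 s : 0 <= rec_compl_rate lam gam mu s.
Proof. exact: sum_all_ge0 (trans_ge0 s) _. Qed.

Lemma stationary_unstaged_eq0 s : ~~ is_staged s -> pi s = 0.
Proof.
elim: s => [|x s IH]; first by rewrite (is_staged_staged false 0 0).
move=> unstaged.
have pi_eq0 r : gam <= r -> pi (x :: s) * r = 0 -> pi (x :: s) = 0.
  by move=> gam_r /eqP; rewrite mulf_eq0 (gt_eqF (lt_le_trans gam_gt0 gam_r)) orbF => /eqP.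
have [staged_s|/IH pis0] := boolP (is_staged s).
  have := stationary_closed_entry trans_ge0 pi_ge0 pi_bal pi_sum1 exit_le
    (@staged_closed R lam gam mu) unstaged.
  apply: pi_eq0.
  apply: le_trans (behead_ge x s) _.
  by apply: sub_sum_all (trans_ge0 _) (fun e e0 => e0) _ => e /eqP ->.
apply: (pi_eq0 _ (behead_ge x s) (balanced_jump_rate_eq0 trans_ge0 pi_ge0 pi_bal pis0 _)).
by apply/eqP => /(congr1 size) /=; lia.
Qed.

Lemma busy_prob_gt0 : 0 < busy_prob pi.
Proof.
rewrite /busy_prob lt_def fine_ge0 ?andbT; last by apply: mean_ge0 => // s; case: (s != [::]).
apply/negP => /eqP busy0.
have busy_eq0 : mean pi (fun s => (s != [::])%:R) = 0%E by rewrite -(fineK busy_fin) busy0.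
have pi_busy0 s : s != [::] -> pi s = 0.
  by move=> sn; have := mean_term_eq0 pi_ge0 s (fun t => ler0n _ _) busy_eq0; rewrite sn mulr1.
have pi_nil0 : pi [::] = 0.
  have nil_neq : [::] != [:: (false, false)] :> fjfa_state by [].
  have := balanced_jump_rate_eq0 trans_ge0 pi_ge0 pi_bal
    (pi_busy0 [:: (false, false)] isT) nil_neq.
  by rewrite jump_rate_nil => /eqP; rewrite mulf_eq0 (gt_eqF lam_gt0) orbF => /eqP.
move: pi_sum1; rewrite esum1 => [/(congr1 fine) /= /eqP|s _]; first by rewrite eq_sym oner_eq0.
by case: (eqVneq s [::]) => [->|/pi_busy0 ->]; rewrite ?pi_nil0.
Qed.

Lemma sys_throughputE : sys_throughput lam gam mu pi = gam * busy_prob pi.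
Proof.
have -> : sys_throughput lam gam mu pi = fine (mean pi (fun s => gam * (s != [::])%:R)).
  congr fine; apply: eq_esum => s _; rewrite sys_compl_rateE.
  by case: s => [|x s]; rewrite /= ?mulr0 ?mulr1.
by rewrite (meanZ pi_ge0) ?(ltW gam_gt0) // fineM.
Qed.

Lemma rec_throughput_ge0 : 0 <= rec_throughput lam gam mu pi.
Proof. by rewrite fine_ge0 // esum_ge0 // => s _; rewrite lee_fin mulr_ge0. Qed.

Lemma rec_throughput_le :
  (gam + 2 * mu) * rec_throughput lam gam mu pi <= 2 * mu ^+ 2 * busy_prob pi.
Proof.
have nu_gt0 : 0 < gam + 2 * mu by rewrite addr_gt0 ?mulr_gt0.
have mu2_ge0 : 0 <= 2 * mu ^+ 2 by rewrite mulr_ge0 ?exprn_ge0 ?ltW.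
have busy_ge0 s : 0 <= (s != [::])%:R :> R := ler0n _ _.
have : (mean pi (fun s => (gam + 2 * mu) * rec_compl_rate lam gam mu s)%R <=
        mean pi (fun s => 2 * mu ^+ 2 * (s != [::])%:R)%R)%E.
  apply: (mean_le_trunc (h := npartial)) => [s|m]; first exact: mulr_ge0 (ltW nu_gt0) _.
  apply: (stationary_drift trans_ge0 pi_ge0 pi_bal pi_sum1 exit_le
    (f := fun t => mu * (minn (npartial t) m)%:R) (C := mu * m%:R)) => [s|s|s|s|s pis].
  - exact: mulr_ge0 (mulr_ge0 (ltW nu_gt0) _) _.
  - exact: mulr_ge0.
  - exact: mulr_ge0 (ltW mu_gt0) _.
  - by apply: ler_wpM2l; [exact: ltW | rewrite ler_nat geq_minr].
  apply: (drift_staged lam gam (ltW mu_gt0)).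
  by apply: (contraNT _ pis) => /stationary_unstaged_eq0 ->.
rewrite !(meanZ pi_ge0) ?(ltW nu_gt0) // -(fineK busy_fin) -EFinM -lee_pdivlMl // -EFinM.
move=> rec_le; have rec_fin : mean pi (rec_compl_rate lam gam mu) \is a fin_num.
  by rewrite ge0_fin_numE ?(mean_ge0 pi_ge0) // (le_lt_trans rec_le) ?ltry.
by rewrite -ler_pdivlMl //; apply: (fine_le rec_fin _ rec_le).
Qed.

End FjfaStationary.

Lemma completion_fraction_bounds (F : realFieldType) (gam mu p q : F) :
  0 < gam -> 0 < mu -> 0 < p -> 0 <= q -> (gam + 2 * mu) * q <= 2 * mu ^+ 2 * p ->
  gam * (gam + 2 * mu) / (gam * (gam + 2 * mu) + 2 * mu ^+ 2) <= gam * p / (gam * p + q) /\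
  q / (gam * p + q) <= 2 * mu ^+ 2 / (gam * (gam + 2 * mu) + 2 * mu ^+ 2).
Proof.
move=> gam_gt0 mu_gt0 p_gt0 q_ge0 nu_q.
have gamp_gt0 : 0 < gam * p + q by rewrite ltr_wpDr // mulr_gt0.
have den_gt0 : 0 < gam * (gam + 2 * mu) + 2 * mu ^+ 2.
  by rewrite ltr_wpDr ?mulr_ge0 ?exprn_ge0 ?ltW // mulr_gt0 // ltr_wpDr ?mulr_ge0 ?ltW.
have key : 0 <= gam * (2 * mu ^+ 2 * p - (gam + 2 * mu) * q).
  by apply: mulr_ge0; [exact: ltW | rewrite subr_ge0].
split.
  by rewrite ler_pdivlMr // mulrAC ler_pdivrMr //; nra.
by rewrite ler_pdivrMr // mulrAC ler_pdivlMr //; nra.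
Qed.

Local Close Scope classical_set_scope.
Unset Implicit Arguments. Set Strict Implicit.

Theorem theorem5 (R : realType) (lam gam mu : R) (pi : fjfa_state -> R) :
  0 < lam -> 0 < gam -> 0 < mu ->
  fjfa_stationary lam gam mu pi ->
  let nu := gam + 2 * mu in
  gam * nu / (gam * nu + 2 * mu ^+ 2) <= w_s lam gam mu pi /\
  w_r lam gam mu pi <= 2 * mu ^+ 2 / (gam * nu + 2 * mu ^+ 2).
Proof.
move=> lam_gt0 gam_gt0 mu_gt0 pi_st nu.
rewrite /w_s /w_r sys_throughputE //.
apply: completion_fraction_bounds => //.
- exact: busy_prob_gt0 pi_st.
- exact: rec_throughput_ge0 pi_st.
- exact: rec_throughput_le pi_st.
Qed.
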